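(* The reduction relation $\to_{{\tt j}/{\tt obox}}$ on $\lambda j$-terms is terminating.
   Context: $\lambda j$-terms are generated by $t,u::= x\mid \lambda x.t\mid t\,u\mid t[x/u]$; $\lambda x.t$ and $t[x/u]$ bind $x$ in $t$ (not in $u$), and terms are considered modulo $\alpha$-conversion. $\mathrm{fv}(t)$ is the set of free variables, $t\{x/u\}$ is capture-avoiding meta-level substitution, and $|t|_x$ is the number of free occurrences of $x$ in $t$. If $|t|_x=n\ge2$, $t_{[y]_x}$ denotes any term obtained from $t$ by replacing $k$ of the free occurrences of $x$ by a fresh variable $y$, for some $1\le k\le n-1$. $\to_{\tt j}$ is the closure under all contexts of: $({\tt w})$ $t[x/u]\to t$ if $|t|_x=0$; $({\tt d})$ $t[x/u]\to t\{x/u\}$ if $|t|_x=1$; $({\tt c})$ $t[x/u]\to t_{[y]_x}[x/u][y/u]$ if $|t|_x\ge2$, $y$ fresh. The substitution equivalence $\equiv_{\tt obox}$ is the smallest equivalence closed under contexts containing: $t[x/s][y/v]\sim t[y/v][x/s]$ if $x\notin\mathrm{fv}(v)$ and $y\notin\mathrm{fv}(s)$; $\lambda y.(t[x/s])\sim(\lambda y.t)[x/s]$ if $y\notin\mathrm{fv}(s)$; $t[x/s]\,v\sim(t\,v)[x/s]$ if $x\notin\mathrm{fv}(v)$; $(t\,v)[x/u]\sim t\,(v[x/u])$ if $x\notin\mathrm{fv}(t)$ and $x\in\mathrm{fv}(v)$; $t[y/v][x/u]\sim t[y/v[x/u]]$ if $x\notin\mathrm{fv}(t)$ and $x\in\mathrm{fv}(v)$.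 $t\to_{{\tt j}/{\tt obox}}u$ iff $t\equiv_{\tt obox}t'\to_{\tt j}u'\equiv_{\tt obox}u$ for some $t',u'$. *)

(* lambda-j terms in de Bruijn notation (terms modulo alpha). *)
From Stdlib Require Import Arith Relations.

(* Var n : de Bruijn index n;  Lam t : lambda binding index 0 of t;
   App t u;  Sub t u : explicit substitution t[x/u], binding index 0 of t
   (and nothing in u). *)
Inductive term : Type :=
| Var : nat -> term
| Lam : term -> term
| App : term -> term -> term
| Sub : term -> term -> term.

Fixpoint lift (c : nat) (t : term) : term :=
  match t with
  | Var n => if n <? c then Var n else Var (S n)
  | Lam t => Lam (lift (S c) t)
  | App t u => App (lift c t) (lift c u)
  | Sub t u => Sub (lift (S c) t) (lift c u)
  end.

(* lower c t : shift free indices > c down by one (used when c is not free) *)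
Fixpoint lower (c : nat) (t : term) : term :=
  match t with
  | Var n => if n <=? c then Var n else Var (pred n)
  | Lam t => Lam (lower (S c) t)
  | App t u => App (lower c t) (lower c u)
  | Sub t u => Sub (lower (S c) t) (lower c u)
  end.

Fixpoint swap (c : nat) (t : term) : term :=
  match t with
  | Var n => if n =? c then Var (S c) else if n =? S c then Var c else Var n
  | Lam t => Lam (swap (S c) t)
  | App t u => App (swap c t) (swap c u)
  | Sub t u => Sub (swap (S c) t) (swap c u)
  end.

(* subst k u t : capture-avoiding meta-level substitution t{k/u}, where
   index k is removed (indices > k decremented) *)
Fixpoint subst (k : nat) (u : term) (t : term) : term :=
  match t with
  | Var n => if n =? k then Nat.iter k (lift 0) u
             else if n <? k then Var n else Var (pred n)
  | Lam t => Lam (subst (S k) u t)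
  | App t s => App (subst k u t) (subst k u s)
  | Sub t s => Sub (subst (S k) u t) (subst k u s)
  end.

Fixpoint occ (k : nat) (t : term) : nat :=
  match t with
  | Var n => if n =? k then 1 else 0
  | Lam t => occ (S k) t
  | App t s => occ k t + occ k s
  | Sub t s => occ (S k) t + occ k s
  end.

(* split c t t' : t' is obtained from t by inserting a fresh index y at
   position c+1 (x being index c) and replacing SOME occurrences of x by y.
   Together with occ c t' >= 1 and occ (S c) t' >= 1 this is t_{[y]_x}. *)
Inductive split : nat -> term -> term -> Prop :=
| split_lt : forall c n, n < c -> split c (Var n) (Var n)
| split_keep : forall c, split c (Var c) (Var c)
| split_rename : forall c, split c (Var c) (Var (S c))
| split_gt : forall c n, c < n -> split c (Var n) (Var (S n))
| split_lam : forall c t t', split (S c) t t' -> split c (Lam t) (Lam t')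
| split_app : forall c t t' s s',
    split c t t' -> split c s s' -> split c (App t s) (App t' s')
| split_sub : forall c t t' s s',
    split (S c) t t' -> split c s s' -> split c (Sub t s) (Sub t' s').

Inductive jrule : term -> term -> Prop :=
| rule_w : forall t u, occ 0 t = 0 -> jrule (Sub t u) (lower 0 t)
| rule_d : forall t u, occ 0 t = 1 -> jrule (Sub t u) (subst 0 u t)
| rule_c : forall t u t', 2 <= occ 0 t -> split 0 t t' ->
    1 <= occ 0 t' -> 1 <= occ 1 t' ->
    (* t_{[y]_x}[x/u][y/u] *)
    jrule (Sub t u) (Sub (Sub t' (lift 0 u)) u).

Inductive ctx (R : term -> term -> Prop) : term -> term -> Prop :=
| ctx_base : forall t u, R t u -> ctx R t u
| ctx_lam : forall t u, ctx R t u -> ctx R (Lam t) (Lam u)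
| ctx_appl : forall t u s, ctx R t u -> ctx R (App t s) (App u s)
| ctx_appr : forall t u s, ctx R t u -> ctx R (App s t) (App s u)
| ctx_subl : forall t u s, ctx R t u -> ctx R (Sub t s) (Sub u s)
| ctx_subr : forall t u s, ctx R t u -> ctx R (Sub s t) (Sub s u).

Definition jstep : term -> term -> Prop := ctx jrule.

(* the axioms of ~ generating obox (side conditions of the form
   "bound variable not free in an outer term" are automatic up to alpha) *)
Inductive obox_ax : term -> term -> Prop :=
  (* t[x/s][y/v] ~ t[y/v][x/s],  y notin fv(s) *)
| ax_comm : forall t s v, occ 0 s = 0 ->
    obox_ax (Sub (Sub t s) v) (Sub (Sub (swap 0 t) (lift 0 v)) (lower 0 s))
  (* lambda y.(t[x/s]) ~ (lambda y.t)[x/s],  y notin fv(s) *)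
| ax_lam : forall t s, occ 0 s = 0 ->
    obox_ax (Lam (Sub t s)) (Sub (Lam (swap 0 t)) (lower 0 s))
  (* t[x/s] v ~ (t v)[x/s],  x notin fv(v) *)
| ax_appl : forall t s v,
    obox_ax (App (Sub t s) v) (Sub (App t (lift 0 v)) s)
  (* (t v)[x/u] ~ t (v[x/u]),  x notin fv(t), x in fv(v) *)
| ax_appr : forall t v u, occ 0 t = 0 -> 0 < occ 0 v ->
    obox_ax (Sub (App t v) u) (App (lower 0 t) (Sub v u))
  (* t[y/v][x/u] ~ t[y/v[x/u]],  x notin fv(t), x in fv(v) *)
| ax_box : forall t v u, occ 1 t = 0 -> 0 < occ 0 v ->
    obox_ax (Sub (Sub t v) u) (Sub (lower 1 t) (Sub v u)).

Definition obox_eq : term -> term -> Prop :=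
  clos_refl_sym_trans term (ctx obox_ax).

Definition jmod (t u : term) : Prop :=
  exists t' u', obox_eq t t' /\ jstep t' u' /\ obox_eq u' u.

(* Every term gets a family of weights: weight k t counts the free occurrences
   of index k in t, where an occurrence inside the argument u of an explicit
   substitution t0[x/u] is counted max(1, weight x t0) times -- once for every
   copy of u that rule c may eventually produce.  With the same multiplicity we
   count the weighted size wsize and the weighted number wsubs of explicit
   substitutions; nsubs is the plain number of explicit substitutions.

   - The axioms of obox only permute a substitution with a construct that does
     not bind or use its variable, so they preserve all these measures.
   - Rules w and d erase (a copy of) their argument: wsize strictly decreases
     and no weight increases.  Rule c splits the weight of x between x and the
     fresh y: wsize, wsubs and all weights stay the same, nsubs grows by one.
   - Both facts are stable under contexts, hence ->j/obox strictly decreases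
     the pair (wsize, wsubs - nsubs) lexicographically (nsubs <= wsubs). *)

From Stdlib Require Import List Arith Relations Lia.
Import ListNotations.

Ltac case_nat :=
  repeat match goal with
  | |- context [?a =? ?b] => destruct (Nat.eqb_spec a b)
  | |- context [?a <? ?b] => destruct (Nat.ltb_spec a b)
  | |- context [?a <=? ?b] => destruct (Nat.leb_spec a b)
  end.

(** * Renamings *)

Definition up (f : nat -> nat) (n : nat) : nat :=
  match n with 0 => 0 | S n => S (f n) end.

Fixpoint ren (f : nat -> nat) (t : term) : term :=
  match t with
  | Var n => Var (f n)
  | Lam t => Lam (ren (up f) t)
  | App t s => App (ren f t) (ren f s)
  | Sub t s => Sub (ren (up f) t) (ren f s)
  end.

Lemma ren_ext : forall t f g, (forall n, f n = g n) -> ren f t = ren g t.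
Proof.
  assert (Hup : forall f g, (forall n, f n = g n) -> forall n, up f n = up g n)
    by (intros f g E [|n]; simpl; congruence).
  induction t; intros f g E; simpl; f_equal; auto.
Qed.

Definition lift_var (c n : nat) : nat := if n <? c then n else S n.
Definition lower_var (c n : nat) : nat := if n <=? c then n else pred n.
Definition swap_var (c n : nat) : nat :=
  if n =? c then S c else if n =? S c then c else n.

Ltac shift_is_renaming :=
  let c := fresh "c" in
  intros t; induction t as [n|t IH|t1 IH1 t2 IH2|t1 IH1 t2 IH2]; intros c; simpl;
  [ unfold lift_var, lower_var, swap_var; case_nat; reflexivity
  | rewrite IH
  | rewrite IH1, IH2; reflexivity
  | rewrite IH1, IH2 ];
  f_equal; apply ren_ext; intros [|n]; simpl;
  unfold lift_var, lower_var, swap_var; case_nat; lia.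

Lemma lift_ren : forall t c, lift c t = ren (lift_var c) t.
Proof. shift_is_renaming. Qed.

Lemma lower_ren : forall t c, lower c t = ren (lower_var c) t.
Proof. shift_is_renaming. Qed.

Lemma swap_ren : forall t c, swap c t = ren (swap_var c) t.
Proof. shift_is_renaming. Qed.

(** * The measures *)

Fixpoint weight (k : nat) (t : term) : nat :=
  match t with
  | Var n => if n =? k then 1 else 0
  | Lam t => weight (S k) t
  | App t s => weight k t + weight k s
  | Sub t s => weight (S k) t + Nat.max 1 (weight 0 t) * weight k s
  end.

Fixpoint wsize (t : term) : nat :=
  match t with
  | Var _ => 1
  | Lam t => wsize t + 1
  | App t s => wsize t + wsize s + 1
  | Sub t s => wsize t + Nat.max 1 (weight 0 t) * wsize s
  end.

Fixpoint wsubs (t : term) : nat :=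
  match t with
  | Var _ => 0
  | Lam t => wsubs t
  | App t s => wsubs t + wsubs s
  | Sub t s => wsubs t + Nat.max 1 (weight 0 t) * (1 + wsubs s)
  end.

Fixpoint nsubs (t : term) : nat :=
  match t with
  | Var _ => 0
  | Lam t => nsubs t
  | App t s => nsubs t + nsubs s
  | Sub t s => nsubs t + nsubs s + 1
  end.

Ltac measures := cbn [weight wsize wsubs nsubs occ].

Lemma le_max1_mul : forall a x, x <= Nat.max 1 a * x.
Proof. intros a x. rewrite <- (Nat.mul_1_l x) at 1. apply Nat.mul_le_mono_r; lia. Qed.

Lemma max1_id : forall x, 1 <= x -> Nat.max 1 x = x.
Proof. intros; lia. Qed.

Lemma occ_le_weight : forall t k, occ k t <= weight k t.
Proof.
  induction t; intros k; measures; case_nat; try lia; auto.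
  - specialize (IHt1 k); specialize (IHt2 k); lia.
  - specialize (IHt1 (S k)); specialize (IHt2 k).
    pose proof (le_max1_mul (weight 0 t1) (weight k t2)); lia.
Qed.

Lemma pos_weight : forall t k, 1 <= occ k t -> 1 <= weight k t.
Proof. intros t k H. pose proof (occ_le_weight t k). lia. Qed.

Lemma weight_occ_0 : forall t k, occ k t = 0 -> weight k t = 0.
Proof.
  induction t; intros k H; cbn [weight occ] in *; case_nat; try lia; auto.
  - rewrite IHt1, IHt2; lia.
  - rewrite IHt1, IHt2; lia.
Qed.

(* Makes wsubs - nsubs a faithful measure: nsubs increases only up to wsubs. *)
Lemma nsubs_le_wsubs : forall t, nsubs t <= wsubs t.
Proof.
  induction t; measures; try lia.
  pose proof (le_max1_mul (weight 0 t1) (1 + wsubs t2)); lia.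
Qed.

Lemma wsize_pos : forall t, 1 <= wsize t.
Proof. induction t; measures; lia. Qed.

(** * Measures along renamings *)

Fixpoint sum_over (l : list nat) (g : nat -> nat) : nat :=
  match l with
  | [] => 0
  | i :: l => g i + sum_over l g
  end.

Lemma sum_over_add : forall l g h,
  sum_over l (fun i => g i + h i) = sum_over l g + sum_over l h.
Proof. induction l; intros; simpl; rewrite ?IHl; lia. Qed.

Lemma sum_over_scale : forall l g m,
  sum_over l (fun i => m * g i) = m * sum_over l g.
Proof. induction l; intros; simpl; rewrite ?IHl; lia. Qed.

Lemma sum_over_map_S : forall l g, sum_over (map S l) g = sum_over l (fun i => g (S i)).
Proof. induction l; intros; simpl; rewrite ?IHl; reflexivity. Qed.

Lemma sum_indicator_out : forall l n, ~ In n l ->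
  sum_over l (fun i => if n =? i then 1 else 0) = 0.
Proof.
  induction l as [|i l IH]; intros n Hn; simpl in *; [reflexivity|].
  case_nat; [subst; tauto|]. rewrite IH; tauto.
Qed.

Lemma sum_indicator_in : forall l n, NoDup l -> In n l ->
  sum_over l (fun i => if n =? i then 1 else 0) = 1.
Proof.
  induction l as [|i l IH]; intros n Hl Hn; simpl in *; [tauto|].
  inversion Hl as [|? ? Hi Hl']; subst.
  case_nat; subst.
  - rewrite sum_indicator_out; auto.
  - apply IH; [assumption|]. destruct Hn; [congruence|assumption].
Qed.

Lemma preimage_up_0 : forall f k, up f k = 0 <-> In k [0].
Proof. intros f [|k]; simpl; intuition discriminate. Qed.

Lemma preimage_up_S : forall f l j, (forall k, f k = j <-> In k l) ->
  forall k, up f k = S j <-> In k (map S l).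
Proof.
  intros f l j Hf [|k]; simpl.
  - split; [discriminate|]. rewrite in_map_iff; intros [? [? _]]; discriminate.
  - rewrite in_map_iff. split.
    + intros E; exists k; split; [reflexivity|]. apply Hf; congruence.
    + intros [k' [E Hk']]. injection E as ->. f_equal; apply Hf; assumption.
Qed.

Lemma NoDup_map_S : forall l, NoDup l -> NoDup (map S l).
Proof.
  intros l Hl. apply NoDup_map_NoDup_ForallPairs; [intros ? ? _ _ E; injection E|]; auto.
Qed.

Lemma weight_ren : forall t f j l, NoDup l -> (forall k, f k = j <-> In k l) ->
  weight j (ren f t) = sum_over l (fun i => weight i t).
Proof.
  induction t; intros f j l Hl Hf; simpl.
  - destruct (Nat.eqb_spec (f n) j) as [E|E];
      [rewrite sum_indicator_in | rewrite sum_indicator_out]; firstorder.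
  - rewrite (IHt _ _ (map S l)), sum_over_map_S; auto using NoDup_map_S, preimage_up_S.
  - rewrite (IHt1 f j l), (IHt2 f j l), sum_over_add by assumption; reflexivity.
  - assert (E0 : weight 0 (ren (up f) t1) = weight 0 t1).
    { rewrite (IHt1 _ _ [0]); simpl; auto using preimage_up_0, NoDup_cons, NoDup_nil. }
    rewrite E0, (IHt1 _ _ (map S l)), (IHt2 f j l), sum_over_map_S, sum_over_add,
      sum_over_scale; auto using NoDup_map_S, preimage_up_S.
Qed.

Lemma weight0_ren_up : forall t f, weight 0 (ren (up f) t) = weight 0 t.
Proof.
  intros t f. rewrite (weight_ren t _ 0 [0]); simpl;
    auto using preimage_up_0, NoDup_cons, NoDup_nil.
Qed.

Lemma wsize_ren : forall t f, wsize (ren f t) = wsize t.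
Proof. induction t; intros f; simpl; rewrite ?weight0_ren_up, ?IHt, ?IHt1, ?IHt2; reflexivity. Qed.

Lemma wsubs_ren : forall t f, wsubs (ren f t) = wsubs t.
Proof. induction t; intros f; simpl; rewrite ?weight0_ren_up, ?IHt, ?IHt1, ?IHt2; reflexivity. Qed.

Lemma nsubs_ren : forall t f, nsubs (ren f t) = nsubs t.
Proof. induction t; intros f; simpl; rewrite ?IHt, ?IHt1, ?IHt2; reflexivity. Qed.

Ltac renaming_invariance :=
  rewrite ?lift_ren, ?lower_ren, ?swap_ren, ?wsize_ren, ?wsubs_ren, ?nsubs_ren.

Ltac weight_by_preimage l :=
  rewrite (weight_ren _ _ _ l);
  [ simpl; lia
  | repeat constructor; simpl; intuition lia
  | intros k; simpl; unfold lift_var, lower_var, swap_var; case_nat; intuition lia ].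

Lemma weight_lift0_0 : forall t, weight 0 (lift 0 t) = 0.
Proof. intros t; rewrite lift_ren; weight_by_preimage (@nil nat). Qed.

Lemma weight_lift0_S : forall t j, weight (S j) (lift 0 t) = weight j t.
Proof. intros t j; rewrite lift_ren; weight_by_preimage [j]. Qed.

Lemma weight_lower_lt : forall t c j, j < c -> weight j (lower c t) = weight j t.
Proof. intros t c j H; rewrite lower_ren; weight_by_preimage [j]. Qed.

Lemma weight_lower_eq : forall t c, weight c (lower c t) = weight c t + weight (S c) t.
Proof. intros t c; rewrite lower_ren; weight_by_preimage [c; S c]. Qed.

Lemma weight_lower_gt : forall t c j, c <= j -> weight (S j) (lower c t) = weight (S (S j)) t.
Proof. intros t c j H; rewrite lower_ren; weight_by_preimage [S (S j)]. Qed.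

Lemma weight_swap : forall t c j, weight j (swap c t) = weight (swap_var c j) t.
Proof. intros t c j; rewrite swap_ren; weight_by_preimage [swap_var c j]. Qed.

Ltac shifted_weights :=
  rewrite ?weight_swap, ?weight_lift0_0, ?weight_lift0_S, ?weight_lower_eq,
    ?weight_lower_gt, ?(weight_lower_lt _ 1 0) by lia; cbn [swap_var Nat.eqb];
  rewrite ?Nat.mul_0_r, ?Nat.add_0_r.

(** * Measures along meta-level substitution *)

(* Nat.iter k (lift 0) u is the copy of u substituted under k binders. *)
Lemma shift_S : forall k u, Nat.iter (S k) (lift 0) u = lift 0 (Nat.iter k (lift 0) u).
Proof. reflexivity. Qed.

Lemma weight_shift_lt : forall k u j, j < k -> weight j (Nat.iter k (lift 0) u) = 0.
Proof.
  induction k; intros u [|j] H; rewrite ?shift_S; try lia.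
  - apply weight_lift0_0.
  - rewrite weight_lift0_S; apply IHk; lia.
Qed.

Lemma weight_shift_ge : forall k u j, k <= j ->
  weight j (Nat.iter k (lift 0) u) = weight (j - k) u.
Proof.
  induction k; intros u [|j] H; rewrite ?shift_S; try lia; auto.
  rewrite weight_lift0_S, IHk by lia; reflexivity.
Qed.

Lemma wsize_shift : forall k u, wsize (Nat.iter k (lift 0) u) = wsize u.
Proof. induction k; intros u; rewrite ?shift_S, ?lift_ren, ?wsize_ren; auto. Qed.

Lemma weight_subst_lt : forall t k u j, j < k -> weight j (subst k u t) = weight j t.
Proof.
  induction t; intros k u j H; cbn [subst]; measures.
  - destruct (Nat.eqb_spec n k) as [->|]; [rewrite weight_shift_lt by lia|];
      case_nat; measures; case_nat; lia.
  - apply IHt; lia.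
  - rewrite IHt1, IHt2; lia.
  - rewrite IHt1, (IHt1 (S k) u 0), IHt2; lia.
Qed.

(* Each of the weight k t occurrences of k receives a copy of u. *)
Lemma weight_subst_ge : forall t k u j, k <= j ->
  weight j (subst k u t) = weight (S j) t + weight k t * weight (j - k) u.
Proof.
  induction t; intros k u j H; cbn [subst]; measures.
  - destruct (Nat.eqb_spec n k) as [->|]; [rewrite weight_shift_ge by lia|];
      case_nat; measures; case_nat; lia.
  - rewrite IHt by lia. replace (S j - S k) with (j - k) by lia. reflexivity.
  - rewrite IHt1, IHt2 by lia. ring.
  - rewrite IHt1, (weight_subst_lt t1 (S k) u 0), IHt2 by lia.
    replace (S j - S k) with (j - k) by lia. ring.
Qed.

(* Each of the weight k t occurrences of k (of size 1) becomes a copy of u. *)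
Lemma wsize_subst : forall t k u,
  wsize (subst k u t) + weight k t = wsize t + weight k t * wsize u.
Proof.
  induction t; intros k u; cbn [subst]; measures.
  - destruct (Nat.eqb_spec n k) as [->|]; [rewrite wsize_shift|];
      measures; case_nat; measures; lia.
  - specialize (IHt (S k) u). lia.
  - specialize (IHt1 k u). specialize (IHt2 k u). nia.
  - specialize (IHt1 (S k) u). specialize (IHt2 k u).
    rewrite (weight_subst_lt t1 (S k) u 0) by lia.
    set (m := Nat.max 1 (weight 0 t1)) in *. nia.
Qed.

(** * Measures along the splitting t_[y]_x *)

Lemma weight_split : forall c t t', split c t t' ->
  (forall j, j < c -> weight j t' = weight j t) /\
  (forall j, c < j -> weight (S j) t' = weight j t) /\
  weight c t' + weight (S c) t' = weight c t.
Proof.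
  induction 1 as [| | | |c t t' _ [L [G E]]|c t t' s s' _ [L [G E]] _ [L' [G' E']]
                  |c t t' s s' _ [L [G E]] _ [L' [G' E']]];
    measures; repeat split; intros; case_nat; try lia.
  - apply L; lia.
  - apply G; lia.
  - rewrite L, L'; lia.
  - rewrite G, G'; lia.
  - rewrite (L 0), L, L' by lia; lia.
  - rewrite (L 0), G, G' by lia; lia.
  - rewrite (L 0) by lia. rewrite <- E, <- E'. ring.
Qed.

Lemma measures_split : forall c t t', split c t t' ->
  wsize t' = wsize t /\ wsubs t' = wsubs t /\ nsubs t' = nsubs t.
Proof.
  induction 1 as [| | | | |c t t' s s' _ [A [B C]] _ [A' [B' C']]
                  |c t t' s s' Hs [A [B C]] _ [A' [B' C']]]; measures; try lia.
  destruct (weight_split _ _ _ Hs) as [L _].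
  rewrite (L 0) by lia. lia.
Qed.

(** * Invariance under obox *)

Definition same_measures (a b : term) : Prop :=
  wsize a = wsize b /\ wsubs a = wsubs b /\ nsubs a = nsubs b /\
  forall j, weight j a = weight j b.

(* In every axiom the moved substitution keeps its multiplicity; only for the
   box axiom (where x occurs in v) this is the identity
   max(1, m * |v|_x) = m * max(1, |v|_x). *)
Lemma obox_ax_same_measures : forall a b, obox_ax a b -> same_measures a b.
Proof.
  intros a b Hab; unfold same_measures.
  destruct Hab as [t s v Hs|t s Hs|t s v|t v u Ht Hv|t v u Ht Hv].
  all: try apply weight_occ_0 in Hs; try apply weight_occ_0 in Ht.
  all: repeat split; [..|intros [|j]]; measures; shifted_weights; rewrite ?Hs, ?Ht;
    renaming_invariance; rewrite ?Nat.mul_0_r, ?Nat.add_0_r, ?Nat.add_0_l; try ring.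
  all: apply (pos_weight v 0) in Hv.
  all: rewrite (max1_id (Nat.max 1 (weight 0 t) * weight 0 v)), (max1_id (weight 0 v)) by nia;
    ring.
Qed.

Lemma same_measures_ctx : forall R : term -> term -> Prop,
  (forall a b, R a b -> same_measures a b) ->
  forall a b, ctx R a b -> same_measures a b.
Proof.
  intros R HR a b H; induction H as [a b H| | | | |]; [auto|..];
    destruct IHctx as [A [B [C D]]]; unfold same_measures; measures;
    rewrite ?A, ?B, ?C, ?D; repeat split; intros; rewrite ?D; reflexivity.
Qed.

Lemma obox_eq_same_measures : forall a b, obox_eq a b -> same_measures a b.
Proof.
  unfold obox_eq, same_measures.
  induction 1 as [a b H| | |a b c _ [A [B [C D]]] _ [A' [B' [C' D']]]].
  - apply same_measures_ctx with (R := obox_ax); auto using obox_ax_same_measures.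
  - repeat split; auto.
  - firstorder.
  - repeat split; congruence.
Qed.

(** * Decrease under ->j *)

Inductive j_decrease (t' t : term) : Prop :=
| shrink : wsize t' < wsize t -> (forall j, weight j t' <= weight j t) -> j_decrease t' t
| duplicate : wsize t' = wsize t -> (forall j, weight j t' = weight j t) ->
    wsubs t' = wsubs t -> nsubs t < nsubs t' -> j_decrease t' t.

Lemma jrule_decrease : forall t t', jrule t t' -> j_decrease t' t.
Proof.
  intros t t' H; destruct H as [t u Hw|t u Hd|t u t' Hc Hs H0 H1].
  - (* w erases u, whose size is positive *)
    apply weight_occ_0 in Hw. pose proof (wsize_pos u).
    apply shrink; measures; rewrite Hw; [renaming_invariance; lia|].
    intros [|j]; shifted_weights; lia.
  - (* d replaces the single occurrence of x by u *)
    assert (Hx : 1 <= weight 0 t) by (apply pos_weight; lia).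
    pose proof (wsize_subst t 0 u). pose proof (wsize_pos u).
    apply shrink; measures; rewrite max1_id by assumption; [nia|].
    intros j. rewrite weight_subst_ge, Nat.sub_0_r by lia. lia.
  - (* c shares the multiplicity of u between the two copies *)
    destruct (weight_split _ _ _ Hs) as [_ [Gt Eq]].
    destruct (measures_split _ _ _ Hs) as [Sz [Fm Nm]].
    apply pos_weight in H0, H1.
    apply duplicate; measures; shifted_weights; rewrite ?max1_id by lia.
    + renaming_invariance; rewrite Sz, <- Eq; ring.
    + intros j; shifted_weights; rewrite Gt, <- Eq by lia; ring.
    + renaming_invariance; rewrite Fm, <- Eq; ring.
    + renaming_invariance; lia.
Qed.

Lemma j_decrease_ctx : forall R : term -> term -> Prop,
  (forall t t', R t t' -> j_decrease t' t) ->
  forall t t', ctx R t t' -> j_decrease t' t.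
Proof.
  intros R HR t t' H.
  induction H as [t t' H|t t' _ IH|t t' s _ IH|t t' s _ IH|t t' s _ IH|t t' s _ IH];
    [auto|..]; destruct IH as [Hsz Hw|Hsz Hw Hfm Hnm].
  - apply shrink; measures; auto; lia.
  - apply duplicate; measures; auto.
  - apply shrink; measures; [lia|]. intros j; specialize (Hw j); lia.
  - apply duplicate; measures; [lia| |lia|lia]. intros j; rewrite Hw; lia.
  - apply shrink; measures; [lia|]. intros j; specialize (Hw j); lia.
  - apply duplicate; measures; [lia| |lia|lia]. intros j; rewrite Hw; lia.
  - (* reducing the body of t[x/s] can only lower the multiplicity of s *)
    assert (Hm : forall x, Nat.max 1 (weight 0 t') * x <= Nat.max 1 (weight 0 t) * x)
      by (intros; apply Nat.mul_le_mono_r; specialize (Hw 0); lia).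
    apply shrink; measures; [specialize (Hm (wsize s)); lia|].
    intros j; specialize (Hm (weight j s)); specialize (Hw (S j)); lia.
  - apply duplicate; measures;
      [rewrite Hsz, Hw | intros j; rewrite !Hw | rewrite Hfm, Hw | lia]; reflexivity.
  - pose proof (le_max1_mul (weight 0 s) (wsize t)).
    apply shrink; measures; [nia|]. intros j; specialize (Hw j); nia.
  - apply duplicate; measures;
      [rewrite Hsz | intros j; rewrite Hw | rewrite Hfm | lia]; reflexivity.
Qed.

Lemma jmod_lex : forall t u, jmod t u ->
  wsize u < wsize t \/ (wsize u = wsize t /\ wsubs u - nsubs u < wsubs t - nsubs t).
Proof.
  intros t u [t' [u' [Et [Hj Eu]]]].
  destruct (obox_eq_same_measures _ _ Et) as [St [Ft [Nt _]]].
  destruct (obox_eq_same_measures _ _ Eu) as [Su [Fu [Nu _]]].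
  pose proof (nsubs_le_wsubs u).
  destruct (j_decrease_ctx jrule jrule_decrease _ _ Hj); lia.
Qed.

Lemma wf_lex_nat : forall (A : Type) (R : A -> A -> Prop) (f g : A -> nat),
  (forall x y, R x y -> f x < f y \/ (f x = f y /\ g x < g y)) -> well_founded R.
Proof.
  intros A R f g Hlex.
  assert (H : forall a b x, f x = a -> g x = b -> Acc R x).
  { intros a; induction a as [a IHa] using lt_wf_ind.
    intros b; induction b as [b IHb] using lt_wf_ind.
    intros x <- <-; constructor; intros y Hy.
    destruct (Hlex y x Hy) as [Hf|[Hf Hg]].
    - exact (IHa _ Hf _ _ eq_refl eq_refl).
    - exact (IHb _ Hg y Hf eq_refl). }
  intros x; exact (H _ _ x eq_refl eq_refl).
Qed.

Theorem corollary28 : well_founded (fun u t => jmod t u).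
Proof.
  apply (wf_lex_nat term _ wsize (fun t => wsubs t - nsubs t)).
  intros u t; apply jmod_lex.
Qed.
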